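(* Let $\varphi,\psi$ be Denjoy counterexamples with rotation numbers $\alpha,\beta$ such that $1,\alpha,\beta$ are rationally independent, and with Cantor minimal sets $\mathcal{Q}_1,\mathcal{Q}_2\subset\mathbb{T}^1$ respectively. Suppose $x_0\in\mathcal{Q}_{1,\mathrm{irr}}$, $y_0\in\mathcal{Q}_{2,\mathrm{irr}}$, closed intervals $J_1,J_2$ with endpoints in $\mathcal{Q}_{1,\mathrm{irr}}$, $\mathcal{Q}_{2,\mathrm{irr}}$ and midpoints $x_0,y_0$, and constants $C_1,C_2>0$ are such that every component $I$ of $\mathbb{T}^1\setminus\mathcal{Q}_1$ contained in $J_1$ satisfies $|I|\le C_1 d(x_0,x_I)^2$ and every component $I$ of $\mathbb{T}^1\setminus\mathcal{Q}_2$ contained in $J_2$ satisfies $|I|\le C_2 d(y_0,y_I)^2$ ($x_I,y_I$ midpoints). Let $f=\varphi\times\psi:\mathbb{T}^2\to\mathbb{T}^2$ and $z_0=(x_0,y_0)$. Then every open circular sector in $\mathbb{T}^2$ with vertex $z_0$, any radius $r>0$ (small enough that the sector is embedded), and opening angle in $(0,\pi)$ intersects $(\mathcal{Q}_{1,\mathrm{irr}}\times\mathcal{Q}_{2,\mathrm{irr}})\setminus\mathcal{O}_f(z_0)$.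
   Context: $\mathbb{T}^1=\mathbb{R}/\mathbb{Z}$ with metric $d$, $|I|$ the length of an interval; $\mathbb{T}^2=\mathbb{T}^1\times\mathbb{T}^1$. A Denjoy counterexample is an orientation-preserving circle homeomorphism with irrational rotation number that is not transitive; its unique minimal set is a Cantor set. For a Cantor set $\mathcal{Q}\subset\mathbb{T}^1$, $\mathcal{Q}_{\mathrm{irr}}$ is $\mathcal{Q}$ minus the endpoints of the components of $\mathbb{T}^1\setminus\mathcal{Q}$. $\mathcal{O}_f(z_0)=\{f^n(z_0):n\in\mathbb{Z}\}$. (Note $\mathcal{Q}_{1,\mathrm{irr}}\times\mathcal{Q}_{2,\mathrm{irr}}$ is the regular set of the semi-conjugacy of $f$ to the translation by $(\alpha,\beta)$.) *)

(* classical reals. The circle T^1 = R/Z is modelled through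
   lifts: points of T^1 are reals taken modulo 1, subsets of T^1 are
   1-periodic predicates on R, circle maps are given by their lifts. *)
From Stdlib Require Import Reals ZArith.
Open Scope R_scope.

Definition cong1 (a b : R) : Prop := exists k : Z, a = b + IZR k.

Definition dT1 (x y : R) : R :=
  Rmin (frac_part (x - y)) (1 - frac_part (x - y)).

Definition circle_homeo_lift (F : R -> R) : Prop :=
  continuity F /\ (forall x y, x < y -> F x < F y) /\
  (forall x, F (x + 1) = F x + 1).

Definition rot_number (F : R -> R) (a : R) : Prop :=
  forall x, Un_cv (fun n => (Nat.iter n F x - x) / INR n) a.

(* q lies on the full (Z-indexed) orbit of x, modulo 1 *)
Definition in_orbit1 (F : R -> R) (x q : R) : Prop :=
  exists n : nat, cong1 q (Nat.iter n F x) \/ cong1 (Nat.iter n F q) x.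

Definition transitive1 (F : R -> R) : Prop :=
  exists x, forall y eps, 0 < eps -> exists q, in_orbit1 F x q /\ dT1 q y < eps.

Definition irrational (a : R) : Prop :=
  forall p q : Z, q <> 0%Z -> a <> IZR p / IZR q.

Definition denjoy (F : R -> R) : Prop :=
  circle_homeo_lift F /\ (exists a, rot_number F a /\ irrational a) /\
  ~ transitive1 F.

Definition periodic1 (Q : R -> Prop) : Prop := forall x, Q x <-> Q (x + 1).

Definition invariant1 (F : R -> R) (Q : R -> Prop) : Prop :=
  forall x, Q x <-> Q (F x).

Definition minimal_set (F : R -> R) (Q : R -> Prop) : Prop :=
  periodic1 Q /\ closed_set Q /\ (exists x, Q x) /\ invariant1 F Q /\
  forall P : R -> Prop, periodic1 P -> closed_set P -> (exists x, P x) ->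
    invariant1 F P -> (forall x, P x -> Q x) -> forall x, Q x -> P x.

(* (a,b) is (a lift of) a component of T^1 \ Q *)
Definition gap (Q : R -> Prop) (a b : R) : Prop :=
  a < b /\ Q a /\ Q b /\ forall x, a < x < b -> ~ Q x.

Definition Qirr (Q : R -> Prop) (x : R) : Prop :=
  Q x /\ ~ (exists a b, gap Q a b /\ (x = a \/ x = b)).

(* integer-indexed orbit of z0 = (x0,y0) under f = phi x psi on T^2 *)
Definition in_orbit2 (phi psi : R -> R) (x0 y0 u v : R) : Prop :=
  exists n : nat,
    (cong1 u (Nat.iter n phi x0) /\ cong1 v (Nat.iter n psi y0)) \/
    (cong1 (Nat.iter n phi u) x0 /\ cong1 (Nat.iter n psi v) y0).

(* open circular sector in the lift R^2 with vertex (x0,y0), radius r,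
   initial direction t0 and opening angle th *)
Definition in_sector (x0 y0 r t0 th : R) (p : R * R) : Prop :=
  exists rho t, 0 < rho < r /\ t0 < t < t0 + th /\
    p = (x0 + rho * cos t, y0 + rho * sin t).

Definition sector_embedded (x0 y0 r t0 th : R) : Prop :=
  forall p q, in_sector x0 y0 r t0 th p -> in_sector x0 y0 r t0 th q ->
    cong1 (fst p) (fst q) -> cong1 (snd p) (snd q) -> p = q.

From Stdlib Require Import Reals ZArith Lra Lia Classical.
Open Scope R_scope.

(* A point T close to x0 lies within 4 C1 d(x0, T)^2 of Q1: a gap of length L
   containing T satisfies L <= C1 (d(x0, T) + L/2)^2, and for gaps that are not
   too long this forces L <= 4 C1 d(x0, T)^2.  By minimality the orbit of x0 is
   dense in Q1, so some phi^k x0 is O(rho^2)-close to the first coordinate of the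
   point at distance rho on the bisector of the sector, and likewise some
   psi^l y0 for the second one; as Q2 has no isolated points we may take l <> k.
   The O(rho^2) error is small against the angular room rho tan(th/2), so
   (phi^k x0, psi^l y0) lies in the sector.  Its coordinates are in the invariant
   sets Q_irr, and it is off the orbit of z0 since l <> k and Denjoy
   counterexamples have no periodic points. *)

Lemma cong1_refl x : cong1 x x.
Proof. exists 0%Z; ring. Qed.

Lemma cong1_sym x y : cong1 x y -> cong1 y x.
Proof. intros [k Hk]; exists (- k)%Z; rewrite opp_IZR; lra. Qed.

Lemma cong1_trans x y z : cong1 x y -> cong1 y z -> cong1 x z.
Proof. intros [k Hk] [l Hl]; exists (l + k)%Z; rewrite plus_IZR; lra. Qed.

Lemma IZR_nat_cases (k : Z) :
  (exists n, IZR k = INR n) \/ (exists n, IZR k = - INR n).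
Proof.
  destruct (Z_le_gt_dec 0 k).
  - left; exists (Z.to_nat k); rewrite INR_IZR_INZ, Z2Nat.id; auto.
  - right; exists (Z.to_nat (- k)); rewrite INR_IZR_INZ, Z2Nat.id by lia.
    rewrite opp_IZR; ring.
Qed.

Lemma periodic1_shift (P : R -> Prop) : periodic1 P ->
  forall k x, P x <-> P (x + IZR k).
Proof.
  intros HP.
  assert (Hn : forall n x, P x <-> P (x + INR n)).
  { induction n as [|n IH]; intros x.
    - rewrite Rplus_0_r; tauto.
    - rewrite S_INR, <- Rplus_assoc, <- (HP (x + INR n)); apply IH. }
  intros k x; destruct (IZR_nat_cases k) as [[n ->] | [n ->]]; [apply Hn|].
  rewrite (Hn n (x + - INR n)), Rplus_assoc, Rplus_opp_l, Rplus_0_r; tauto.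
Qed.

Lemma closed_set_iff (Q : R -> Prop) : closed_set Q <->
  forall x, ~ Q x -> exists e, 0 < e /\ forall y, Rabs (y - x) < e -> ~ Q y.
Proof.
  split.
  - intros H x Hx; destruct (H x Hx) as [[e He] Hi].
    exists e; split; [exact He|]; intros y Hy; apply Hi; exact Hy.
  - intros H x Hx; destruct (H x Hx) as [e [He Hy]].
    exists (mkposreal e He); intros y Hy'; apply Hy; exact Hy'.
Qed.

Lemma continuity_pt_eps f x : continuity_pt f x ->
  forall eps, 0 < eps ->
  exists d, 0 < d /\ forall y, Rabs (y - x) < d -> Rabs (f y - f x) < eps.
Proof.
  intros H eps He; destruct (H eps He) as [d [Hd Hy]].
  exists d; split; auto; intros y Hyd.
  destruct (Req_dec x y) as [<-|Hne].
  - rewrite Rminus_diag, Rabs_R0; exact He.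
  - apply (Hy y); repeat split; auto.
Qed.

Lemma gap_shift Q a b k : periodic1 Q -> gap Q a b -> gap Q (a + IZR k) (b + IZR k).
Proof.
  intros HP [Hab [Ha [Hb Hn]]].
  split; [lra|]; split; [apply periodic1_shift; auto|].
  split; [apply periodic1_shift; auto|].
  intros x Hx HQ; apply (Hn (x + IZR (- k))); [rewrite opp_IZR; lra|].
  apply periodic1_shift; auto.
Qed.

Lemma Qirr_periodic Q : periodic1 Q -> periodic1 (Qirr Q).
Proof.
  intros HP.
  assert (H : forall x k, Qirr Q x -> Qirr Q (x + IZR k)).
  { intros x k [HQ Hn]; split; [apply periodic1_shift; auto|].
    intros [a [b [Hg He]]]; apply Hn; exists (a + IZR (- k)), (b + IZR (- k)).
    split; [apply gap_shift; auto|]; rewrite opp_IZR; lra. }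
  intros x; split; [apply (H x 1%Z)|].
  intros Hx; pose proof (H _ (-1)%Z Hx) as Hx'.
  replace (x + 1 + IZR (-1)) with x in Hx' by (simpl; ring); exact Hx'.
Qed.

Section CircleLift.

Variable F : R -> R.
Hypothesis HF : circle_homeo_lift F.

Lemma lift_lt x y : x < y -> F x < F y.
Proof. apply HF. Qed.

Lemma lift_lt_inv x y : F x < F y -> x < y.
Proof.
  intros H; destruct (Rtotal_order x y) as [|[->|Hyx]]; auto.
  - lra.
  - pose proof (lift_lt _ _ Hyx); lra.
Qed.

Lemma lift_inj x y : F x = F y -> x = y.
Proof.
  intros E; destruct (Rtotal_order x y) as [H|[|H]]; auto;
    apply lift_lt in H; lra.
Qed.

Lemma lift_shift k x : F (x + IZR k) = F x + IZR k.
Proof.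
  destruct HF as [_ [_ H1]].
  assert (Hn : forall n x, F (x + INR n) = F x + INR n).
  { induction n as [|n IH]; intros y.
    - rewrite !Rplus_0_r; auto.
    - rewrite S_INR, <- !Rplus_assoc, H1, IH; auto. }
  destruct (IZR_nat_cases k) as [[n ->] | [n ->]]; [apply Hn|].
  pose proof (Hn n (x + - INR n)) as E.
  rewrite Rplus_assoc, Rplus_opp_l, Rplus_0_r in E; lra.
Qed.

Lemma lift_surj z : exists w, F w = z.
Proof.
  destruct HF as [Hc _].
  set (n := Int_part (z - F 0)).
  destruct (base_Int_part (z - F 0)) as [H1 H2]; fold n in H1, H2.
  assert (E0 : F (IZR n) = F 0 + IZR n).
  { rewrite <- lift_shift; f_equal; ring. }
  assert (E1 : F (IZR n + 1) = F 0 + IZR n + 1).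
  { rewrite <- E0, <- (lift_shift 1); reflexivity. }
  destruct (IVT_cor (fun w => F w - z) (IZR n) (IZR n + 1)) as [w [_ Hw]].
  - apply continuity_minus; [auto | apply continuity_const; intros ? ?; auto].
  - lra.
  - rewrite E0, E1; assert (0 <= F 0 + IZR n + 1 - z) by lra; nra.
  - exists w; lra.
Qed.

Lemma iter_shift n k x : Nat.iter n F (x + IZR k) = Nat.iter n F x + IZR k.
Proof. induction n as [|n IH]; simpl; [|rewrite IH, lift_shift]; auto. Qed.

Lemma iter_lt n x y : x < y -> Nat.iter n F x < Nat.iter n F y.
Proof. induction n; simpl; auto using lift_lt. Qed.

Lemma iter_inj n x y : Nat.iter n F x = Nat.iter n F y -> x = y.
Proof.
  intros E; destruct (Rtotal_order x y) as [H|[|H]]; auto;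
    apply (iter_lt n) in H; lra.
Qed.

Lemma cong1_iter n a b : cong1 a b -> cong1 (Nat.iter n F a) (Nat.iter n F b).
Proof. intros [k ->]; exists k; apply iter_shift. Qed.

Lemma cong1_iter_inv n a b :
  cong1 (Nat.iter n F a) (Nat.iter n F b) -> cong1 a b.
Proof.
  intros [k Hk]; exists k; apply (iter_inj n); rewrite iter_shift; auto.
Qed.

Lemma invariant1_iter (P : R -> Prop) : invariant1 F P ->
  forall n y, P (Nat.iter n F y) <-> P y.
Proof.
  intros HI n y; induction n as [|n IH]; simpl; [tauto|].
  rewrite <- (HI (Nat.iter n F y)); exact IH.
Qed.

Lemma in_orbit1_refl x : in_orbit1 F x x.
Proof. exists 0%nat; left; apply cong1_refl. Qed.

Lemma in_orbit1_shift x q k : in_orbit1 F x q -> in_orbit1 F x (q + IZR k).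
Proof.
  intros [n [H|H]]; exists n; [left|right].
  - eapply cong1_trans; [|exact H]; exists k; ring.
  - rewrite iter_shift; eapply cong1_trans; [|exact H]; exists k; ring.
Qed.

Lemma in_orbit1_step x q : in_orbit1 F x q -> in_orbit1 F x (F q).
Proof.
  intros [n [H|H]].
  - exists (S n); left; apply (cong1_iter 1); exact H.
  - destruct n as [|n].
    + exists 1%nat; left; apply (cong1_iter 1); exact H.
    + exists n; right; rewrite <- Nat.iter_succ_r; exact H.
Qed.

Lemma in_orbit1_step_inv x w : in_orbit1 F x (F w) -> in_orbit1 F x w.
Proof.
  intros [n [H|H]].
  - destruct n as [|n].
    + exists 1%nat; right; exact H.
    + exists n; left; apply (cong1_iter_inv 1); exact H.
  - exists (S n); right; rewrite Nat.iter_succ_r; exact H.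
Qed.

Lemma orbit_invariant (P : R -> Prop) x : periodic1 P -> invariant1 F P -> P x ->
  forall q, in_orbit1 F x q -> P q.
Proof.
  intros HP HI Hx q [n [[k ->]|[k Hk]]].
  - apply periodic1_shift, invariant1_iter; auto.
  - apply (invariant1_iter P HI n); rewrite Hk; apply periodic1_shift; auto.
Qed.

Definition orbit_closure (x0 y : R) : Prop :=
  forall eps, 0 < eps -> exists q, in_orbit1 F x0 q /\ Rabs (q - y) < eps.

Lemma orbit_closure_periodic x0 : periodic1 (orbit_closure x0).
Proof.
  intros x; split; intros H e He; destruct (H e He) as [q [Hq Hd]].
  - exists (q + IZR 1); split; [apply in_orbit1_shift; auto|].
    simpl; replace (q + 1 - (x + 1)) with (q - x) by ring; auto.
  - exists (q + IZR (-1)); split; [apply in_orbit1_shift; auto|].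
    simpl; replace (q + -1 - x) with (q - (x + 1)) by ring; auto.
Qed.

Lemma orbit_closure_closed x0 : closed_set (orbit_closure x0).
Proof.
  apply closed_set_iff; intros x Hx.
  apply not_all_ex_not in Hx as [e He]; apply imply_to_and in He as [He Hn].
  exists (e / 2); split; [lra|]; intros y Hy Hcy.
  destruct (Hcy (e / 2)) as [q [Hq Hd]]; [lra|].
  apply Hn; exists q; split; auto.
  replace (q - x) with ((q - y) + (y - x)) by ring.
  eapply Rle_lt_trans; [apply Rabs_triang | lra].
Qed.

Lemma orbit_closure_invariant x0 : invariant1 F (orbit_closure x0).
Proof.
  intros x; split; intros H e He.
  - destruct (continuity_pt_eps F x (proj1 HF x) e He) as [d [Hd Hy]].
    destruct (H d Hd) as [q [Hq Hqd]].
    exists (F q); split; [apply in_orbit1_step | apply Hy]; auto.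
  - (* F (x - e) < F w < F (x + e) forces |w - x| < e. *)
    set (d := Rmin (F (x + e) - F x) (F x - F (x - e))).
    assert (Hd : 0 < d).
    { apply Rmin_pos; [pose proof (lift_lt x (x + e)) | pose proof (lift_lt (x - e) x)];
        lra. }
    destruct (H d Hd) as [q [Hq Hqd]]; destruct (lift_surj q) as [w <-].
    exists w; split; [apply in_orbit1_step_inv; auto|].
    assert (d <= F (x + e) - F x) by apply Rmin_l.
    assert (d <= F x - F (x - e)) by apply Rmin_r.
    apply Rabs_def2 in Hqd as [Ha Hb].
    assert (x - e < w < x + e) by (split; apply lift_lt_inv; lra).
    apply Rabs_def1; lra.
Qed.

Lemma minimal_set_orbit_dense Q x0 : minimal_set F Q -> Q x0 ->
  forall y, Q y -> orbit_closure x0 y.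
Proof.
  intros [HP [HC [_ [HI Hmin]]]] H0; apply Hmin.
  - apply orbit_closure_periodic.
  - apply orbit_closure_closed.
  - exists x0; intros e He; exists x0; split; [apply in_orbit1_refl|].
    rewrite Rminus_diag, Rabs_R0; auto.
  - apply orbit_closure_invariant.
  - intros y Hy; apply NNPP; intros Hny.
    destruct (proj1 (closed_set_iff Q) HC y Hny) as [e [He Hn]].
    destruct (Hy e He) as [q [Hq Hd]].
    apply (Hn q Hd), (orbit_invariant Q x0); auto.
Qed.

Lemma gap_lift Q a b : invariant1 F Q -> gap Q a b -> gap Q (F a) (F b).
Proof.
  intros HI [Hab [Ha [Hb Hn]]].
  split; [apply lift_lt; auto|]; split; [apply (HI a); auto|].
  split; [apply (HI b); auto|]; intros x Hz HQ; destruct (lift_surj x) as [w <-].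
  apply (Hn w); [split; apply lift_lt_inv; tauto | apply (HI w); auto].
Qed.

Lemma gap_lift_inv Q a b : invariant1 F Q -> gap Q (F a) (F b) -> gap Q a b.
Proof.
  intros HI [Hab [Ha [Hb Hn]]].
  split; [apply lift_lt_inv; auto|]; split; [apply (HI a); auto|].
  split; [apply (HI b); auto|]; intros x Hz HQ.
  apply (Hn (F x)); [split; apply lift_lt; tauto | apply (HI x); auto].
Qed.

Lemma Qirr_invariant Q : invariant1 F Q -> invariant1 F (Qirr Q).
Proof.
  intros HI x; split; intros [HQ Hn]; (split; [apply (HI x); auto|]);
    intros [a [b [Hg He]]]; apply Hn.
  - destruct (lift_surj a) as [a' <-], (lift_surj b) as [b' <-].
    exists a', b'; split; [apply gap_lift_inv; auto|].
    destruct He; [left | right]; apply lift_inj; auto.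
  - exists (F a), (F b); split; [apply gap_lift; auto|].
    destruct He; subst; auto.
Qed.

Lemma in_orbit1_Qirr Q x q : periodic1 Q -> invariant1 F Q -> Qirr Q x ->
  in_orbit1 F x q -> Qirr Q q.
Proof.
  intros HP HI Hx; apply (orbit_invariant (Qirr Q) x); auto.
  - apply Qirr_periodic, HP.
  - apply Qirr_invariant, HI.
Qed.

End CircleLift.

Lemma closed_set_opp Q : closed_set Q -> closed_set (fun z => Q (- z)).
Proof.
  rewrite !closed_set_iff; intros H x Hx.
  destruct (H (- x) Hx) as [e [He Hy]]; exists e; split; auto.
  intros y Hyx; apply Hy; rewrite <- Rabs_Ropp; replace (- (- y - - x)) with (y - x) by ring;
    exact Hyx.
Qed.

Lemma gap_opp Q a b : gap (fun z => Q (- z)) a b -> gap Q (- b) (- a).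
Proof.
  intros [Hab [Ha [Hb Hg]]]; split; [lra|]; split; [auto|]; split; [auto|].
  intros x Hx HQ; apply (Hg (- x)); [lra | rewrite Ropp_involutive; auto].
Qed.

Lemma last_point_below Q lo m : closed_set Q -> Q lo -> lo < m -> ~ Q m ->
  exists a, Q a /\ lo <= a < m /\ forall z, a < z <= m -> ~ Q z.
Proof.
  intros HC Hlo Hlm Hm.
  destruct (completeness (fun z => Q z /\ lo <= z <= m)) as [a [Hub Hl]].
  - exists m; intros z [_ Hz]; lra.
  - exists lo; split; auto; lra.
  - assert (lo <= a) by (apply Hub; split; auto; lra).
    assert (a <= m) by (apply Hl; intros z [_ Hz]; lra).
    assert (HQa : Q a).
    { apply NNPP; intro Hna.
      destruct (proj1 (closed_set_iff Q) HC a Hna) as [e [He Hy]].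
      enough (a <= a - e) by lra.
      apply Hl; intros z Hz; apply Rnot_lt_le; intros Hz'.
      assert (z <= a) by (apply Hub; auto).
      apply (Hy z); [apply Rabs_def1; lra | apply Hz]. }
    exists a; split; [auto|]; split; [split; auto|].
    + destruct (Req_dec a m) as [<-|]; [contradiction | lra].
    + intros z Hz HQz; assert (z <= a) by (apply Hub; split; auto; lra); lra.
Qed.

Lemma first_point_above Q hi m : closed_set Q -> Q hi -> m < hi -> ~ Q m ->
  exists b, Q b /\ m < b <= hi /\ forall z, m <= z < b -> ~ Q z.
Proof.
  intros HC Hhi Hmh Hm.
  destruct (last_point_below (fun z => Q (- z)) (- hi) (- m)) as [a [Ha [Hr Hz]]];
    try rewrite Ropp_involutive; auto using closed_set_opp; try lra.
  exists (- a); split; [auto|]; split; [lra|].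
  intros z Hz' HQ; apply (Hz (- z)); [lra | rewrite Ropp_involutive; auto].
Qed.

Lemma gap_around Q lo hi m : closed_set Q -> Q lo -> Q hi -> lo < m < hi -> ~ Q m ->
  exists a b, gap Q a b /\ lo <= a /\ a < m < b /\ b <= hi.
Proof.
  intros HC Hlo Hhi Hm HQm.
  destruct (last_point_below Q lo m) as [a [Ha [Ha1 Ha2]]]; auto; try lra.
  destruct (first_point_above Q hi m) as [b [Hb [Hb1 Hb2]]]; auto; try lra.
  exists a, b; split; [|lra]; split; [lra|]; split; [auto|]; split; [auto|].
  intros x Hx; destruct (Rle_lt_dec x m); [apply Ha2 | apply Hb2]; lra.
Qed.

Lemma Qirr_not_isolated_right Q w e : closed_set Q -> periodic1 Q -> Qirr Q w ->
  0 < e < 1 -> exists q, Q q /\ w < q < w + e.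
Proof.
  intros HC HP [Hw Hn] He; apply NNPP; intro Hno.
  destruct (classic (Q (w + e / 2))) as [Hq|Hq].
  { apply Hno; exists (w + e / 2); split; auto; lra. }
  destruct (gap_around Q w (w + 1) (w + e / 2)) as [a [b [Hg [H1 [H2 H3]]]]];
    auto; [apply (HP w); auto | lra |].
  apply Hn; exists a, b; split; [auto | left].
  destruct (Req_dec w a); auto; exfalso.
  apply Hno; exists a; destruct Hg as [_ [Ha _]]; split; auto; lra.
Qed.

(* Gaps are disjoint, so at most one gap of length > L starts in (x0, x0 + L). *)
Lemma gaps_short_right Q x0 h L : 0 < h -> 0 < L ->
  exists d, 0 < d <= h /\
    forall a b, gap Q a b -> x0 < a < x0 + d -> b - a <= L.
Proof.
  intros Hh HL; set (d0 := Rmin h L).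
  assert (Hd0 : 0 < d0) by (apply Rmin_pos; auto).
  assert (d0 <= h) by apply Rmin_l; assert (d0 <= L) by apply Rmin_r.
  destruct (classic (exists a b, gap Q a b /\ x0 < a < x0 + d0 /\ b - a > L))
    as [[a1 [b1 [[_ [Ha1 _]] [Ha1x _]]]] | Hno].
  - exists (a1 - x0); split; [lra|].
    intros a b [Hab [Ha [Hb Hg]]] Hax; apply Rnot_lt_le; intro HLt.
    apply (Hg a1); [lra | auto].
  - exists d0; split; [lra|]; intros a b Hg Hax; apply Rnot_lt_le; intro HLt.
    apply Hno; exists a, b; split; [|split]; auto; lra.
Qed.

Lemma small_root_quadratic_bound C L D : 0 < C -> 0 < L -> C * L <= 1 -> 0 <= D ->
  L <= C * (D + L / 2) ^ 2 -> L <= 4 * C * D ^ 2.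
Proof.
  intros HC HL HCL HD H.
  assert (0 <= (D - L / 2) ^ 2) by apply pow2_ge_0.
  assert ((D + L / 2) ^ 2 <= 2 * D ^ 2 + L ^ 2 / 2) by (simpl in *; nra).
  assert (C * L ^ 2 <= L) by (simpl; nra).
  nra.
Qed.

Lemma quadratic_approx_right Q x0 h C : closed_set Q -> Q x0 ->
  ~ (exists b, gap Q x0 b) -> 0 < h -> Q (x0 + h) -> 0 < C ->
  (forall a b, gap Q a b -> x0 <= a -> b <= x0 + h ->
     b - a <= C * ((a + b) / 2 - x0) ^ 2) ->
  exists d, 0 < d /\ forall T, x0 < T < x0 + d ->
    exists q, Q q /\ Rabs (q - T) <= 4 * C * (T - x0) ^ 2.
Proof.
  intros HC H0 Hng Hh Hhi HCp Hest.
  destruct (gaps_short_right Q x0 h (1 / C)) as [d [Hd Hshort]];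
    [auto | apply Rdiv_lt_0_compat; lra |].
  exists d; split; [lra|]; intros T HT.
  destruct (classic (Q T)) as [HQT|HQT].
  { exists T; split; auto; rewrite Rminus_diag, Rabs_R0.
    assert (0 <= (T - x0) ^ 2) by apply pow2_ge_0; nra. }
  destruct (gap_around Q x0 (x0 + h) T) as [a [b [Hg [H1 [H2 H3]]]]]; auto; [lra|].
  assert (Hax : x0 < a).
  { destruct H1 as [|<-]; auto; exfalso; apply Hng; exists b; auto. }
  assert (HL : b - a <= 1 / C) by (apply (Hshort a b Hg); lra).
  assert (Hab : b - a <= 4 * C * (T - x0) ^ 2).
  { apply small_root_quadratic_bound; try lra.
    - replace 1 with (C * (1 / C)) by (field; lra); apply Rmult_le_compat_l; lra.
    - eapply Rle_trans; [apply (Hest a b Hg); lra|].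
      apply Rmult_le_compat_l; [lra | apply pow_incr; lra]. }
  exists a; split; [apply Hg|]; rewrite Rabs_left by lra; lra.
Qed.

Lemma quadratic_approx Q x0 h C : closed_set Q -> Qirr Q x0 ->
  0 < h -> Q (x0 + h) -> Q (x0 - h) -> 0 < C ->
  (forall a b, gap Q a b -> x0 - h <= a -> b <= x0 + h ->
     b - a <= C * ((a + b) / 2 - x0) ^ 2) ->
  exists d, 0 < d /\ forall T, Rabs (T - x0) < d ->
    exists q, Q q /\ Rabs (q - T) <= 4 * C * (T - x0) ^ 2.
Proof.
  intros HC [H0 Hirr] Hh Hhi Hlo HCp Hest.
  destruct (quadratic_approx_right Q x0 h C) as [d1 [Hd1 H1]]; auto.
  { intros [b Hb]; apply Hirr; exists x0, b; auto. }
  { intros a b Hg Ha Hb; apply Hest; auto; lra. }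
  destruct (quadratic_approx_right (fun z => Q (- z)) (- x0) h C) as [d2 [Hd2 H2]];
    auto using closed_set_opp.
  { rewrite Ropp_involutive; auto. }
  { intros [b Hb]; apply gap_opp in Hb; rewrite Ropp_involutive in Hb.
    apply Hirr; exists (- b), x0; auto. }
  { replace (- (- x0 + h)) with (x0 - h) by ring; auto. }
  { intros a b Hg Ha Hb; apply gap_opp in Hg.
    replace (((a + b) / 2 - - x0) ^ 2) with (((- b + - a) / 2 - x0) ^ 2) by field.
    replace (b - a) with (- a - - b) by ring; apply Hest; auto; lra. }
  exists (Rmin d1 d2); split; [apply Rmin_pos; auto|].
  intros T HT; apply Rabs_def2 in HT as [HTa HTb].
  assert (Rmin d1 d2 <= d1) by apply Rmin_l; assert (Rmin d1 d2 <= d2) by apply Rmin_r.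
  destruct (Rtotal_order T x0) as [Hlt|[->|Hgt]].
  - destruct (H2 (- T)) as [q [Hq Hqd]]; [lra|].
    exists (- q); split; auto.
    replace (- q - T) with (- (q - - T)) by ring; rewrite Rabs_Ropp.
    replace ((T - x0) ^ 2) with ((- T - - x0) ^ 2) by ring; auto.
  - exists x0; split; auto; rewrite Rminus_diag, Rabs_R0; simpl; lra.
  - apply H1; lra.
Qed.

Definition orbit_index (F : R -> R) (x : R) (k : Z) (q : R) : Prop :=
  exists n m : nat, k = (Z.of_nat n - Z.of_nat m)%Z /\
    cong1 (Nat.iter m F q) (Nat.iter n F x).

Definition aperiodic (F : R -> R) : Prop :=
  forall y n, (0 < n)%nat -> ~ cong1 (Nat.iter n F y) y.

Lemma in_orbit1_index F x q : in_orbit1 F x q -> exists k, orbit_index F x k q.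
Proof.
  intros [n [H|H]]; eexists; [exists n, 0%nat | exists 0%nat, n]; split; eauto.
Qed.

Lemma in_orbit2_index phi psi x0 y0 u v : in_orbit2 phi psi x0 y0 u v ->
  exists k, orbit_index phi x0 k u /\ orbit_index psi y0 k v.
Proof.
  intros [n [[Hu Hv]|[Hu Hv]]]; eexists;
    [split; exists n, 0%nat | split; exists 0%nat, n]; eauto.
Qed.

Section OrbitIndex.

Variable F : R -> R.
Hypothesis HF : circle_homeo_lift F.

Lemma orbit_index_cong x k q q' :
  orbit_index F x k q -> orbit_index F x k q' -> cong1 q q'.
Proof.
  intros [n [m [-> H]]] [n' [m' [Hk H']]].
  apply (cong1_iter_inv F HF (m' + m)).
  apply (cong1_iter F HF m') in H; apply (cong1_iter F HF m) in H'.
  rewrite <- !Nat.iter_add in H, H'.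
  replace (m' + n)%nat with (m + n')%nat in H by lia.
  rewrite Nat.add_comm in H'; eapply cong1_trans; [exact H | apply cong1_sym, H'].
Qed.

Lemma iter_cong_inj : aperiodic F ->
  forall a b y, cong1 (Nat.iter a F y) (Nat.iter b F y) -> a = b.
Proof.
  intros Hap.
  assert (Hlt : forall a b y, (a < b)%nat -> ~ cong1 (Nat.iter a F y) (Nat.iter b F y)).
  { intros a b y Hab Hc; apply (Hap (Nat.iter a F y) (b - a)%nat); [lia|].
    rewrite <- Nat.iter_add; replace (b - a + a)%nat with b by lia.
    apply cong1_sym; auto. }
  intros a b y Hc; destruct (Nat.lt_total a b) as [H|[H|H]]; auto; exfalso.
  - eapply Hlt; eauto.
  - eapply Hlt; [exact H | apply cong1_sym; eauto].
Qed.

Lemma orbit_index_unique x q k k' : aperiodic F ->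
  orbit_index F x k q -> orbit_index F x k' q -> k = k'.
Proof.
  intros Hap [n [m [-> H]]] [n' [m' [-> H']]].
  apply (cong1_iter F HF m') in H; apply (cong1_iter F HF m) in H'.
  rewrite <- !Nat.iter_add in H, H'; rewrite Nat.add_comm in H'.
  enough ((m' + n)%nat = (m + n')%nat) by lia.
  apply (iter_cong_inj Hap _ _ x); eapply cong1_trans; [apply cong1_sym, H | exact H'].
Qed.

Lemma iter_mul j y k : Nat.iter j F y = y + IZR k ->
  forall m, Nat.iter (m * j) F y = y + IZR (Z.of_nat m * k).
Proof.
  intros Hj m; induction m as [|m IH]; [simpl; ring|].
  replace (S m * j)%nat with (j + m * j)%nat by lia.
  rewrite Nat.iter_add, IH, iter_shift, Hj by auto.
  rewrite Nat2Z.inj_succ, Z.mul_succ_l, plus_IZR; ring.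
Qed.

(* A periodic orbit F^j y = y + k forces the rotation number k / j. *)
Lemma irrational_rotation_aperiodic a :
  rot_number F a -> irrational a -> aperiodic F.
Proof.
  intros Hr Hirr y j Hj [k Hk].
  apply (Hirr k (Z.of_nat j)); [lia|]; rewrite <- INR_IZR_INZ.
  apply cond_eq; intros eps He.
  destruct (Hr y eps He) as [N HN].
  specialize (HN (S N * j)%nat ltac:(nia)); unfold R_dist in HN.
  rewrite (iter_mul j y k Hk (S N)) in HN.
  replace ((y + IZR (Z.of_nat (S N) * k) - y) / INR (S N * j)) with (IZR k / INR j)
    in HN; [rewrite Rabs_minus_sym; exact HN|].
  rewrite mult_INR, mult_IZR, <- INR_IZR_INZ; field; split; apply not_0_INR; lia.
Qed.

Lemma not_in_orbit2_of_index psi x0 y0 k u v : aperiodic F ->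
  orbit_index F x0 k u -> ~ orbit_index psi y0 k v -> ~ in_orbit2 F psi x0 y0 u v.
Proof.
  intros Hap Hu Hv Horb; destruct (in_orbit2_index _ _ _ _ _ _ Horb) as [k' [Hu' Hv']].
  rewrite (orbit_index_unique x0 u k k' Hap Hu Hu') in Hv; contradiction.
Qed.

End OrbitIndex.

Lemma polar_rotation A B t : 0 < A ->
  let S := sqrt (1 + (B / A) ^ 2) in
  A * cos t - B * sin t = A * S * cos (t + atan (B / A)) /\
  A * sin t + B * cos t = A * S * sin (t + atan (B / A)).
Proof.
  intros HA S.
  assert (HS : 0 < S) by (apply sqrt_lt_R0; pose proof (pow2_ge_0 (B / A)); lra).
  assert (HS2 : (B / A)² = (B / A) ^ 2) by (unfold Rsqr; ring).
  assert (Hc : cos (atan (B / A)) = 1 / S) by (rewrite cos_atan, HS2; reflexivity).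
  assert (Hs : sin (atan (B / A)) = (B / A) / S) by (rewrite sin_atan, HS2; reflexivity).
  rewrite cos_plus, sin_plus, Hc, Hs; split; field; lra.
Qed.

Lemma in_sector_rotated x0 y0 r t0 th A B : 0 < th < PI -> 0 < A ->
  Rabs B < A * tan (th / 2) -> A + Rabs B < r ->
  let t := t0 + th / 2 in
  in_sector x0 y0 r t0 th
    (x0 + (A * cos t - B * sin t), y0 + (A * sin t + B * cos t)).
Proof.
  intros Hth HA HB Hr t.
  set (x := B / A); set (S := sqrt (1 + x ^ 2)).
  destruct (polar_rotation A B t HA) as [E1 E2]; fold x S in E1, E2.
  assert (HS2 : S * S = 1 + x ^ 2) by (apply sqrt_sqrt; pose proof (pow2_ge_0 x); lra).
  assert (HS : 0 < S) by (apply sqrt_lt_R0; pose proof (pow2_ge_0 x); lra).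
  assert (HxA : x * A = B) by (unfold x; field; lra).
  pose proof (Rabs_def2 _ _ HB) as [HB1 HB2].
  assert (Hx1 : - tan (th / 2) < x) by (apply (Rmult_lt_reg_r A); lra).
  assert (Hx2 : x < tan (th / 2)) by (apply (Rmult_lt_reg_r A); lra).
  assert (Hat : - (th / 2) < atan x < th / 2).
  { rewrite <- (atan_tan (th / 2)) by lra; rewrite <- atan_opp.
    split; apply atan_increasing; lra. }
  exists (A * S), (t + atan x); split; [split; [nra|] | split].
  - assert (HAS : (A * S) ^ 2 = A ^ 2 + B ^ 2).
    { replace ((A * S) ^ 2) with (A ^ 2 * (S * S)) by ring; rewrite HS2, <- HxA; ring. }
    pose proof (Rabs_pos B); pose proof (pow2_abs B).
    enough (A * S <= A + Rabs B) by lra.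
    apply Rnot_lt_le; intro Hlt.
    assert ((A + Rabs B) * (A + Rabs B) < (A * S) * (A * S))
      by (apply Rmult_le_0_lt_compat; lra).
    simpl in *; nra.
  - unfold t; split; lra.
  - rewrite <- E1, <- E2; reflexivity.
Qed.

Lemma in_sector_perturbed_bisector x0 y0 r t0 th rho E e1 e2 : 0 < th < PI ->
  8 * E < rho -> 8 * E < rho * tan (th / 2) -> rho + 4 * E < r ->
  Rabs e1 <= E -> Rabs e2 <= E ->
  in_sector x0 y0 r t0 th
    (x0 + rho * cos (t0 + th / 2) + e1, y0 + rho * sin (t0 + th / 2) + e2).
Proof.
  intros Hth HE1 HE2 Hr He1 He2.
  set (t := t0 + th / 2); set (c := cos t); set (s := sin t).
  assert (Hcs : c * c + s * s = 1)
    by (unfold c, s; pose proof (sin2_cos2 t); unfold Rsqr in *; lra).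
  assert (Hmul : forall u e, Rabs u <= 1 -> Rabs (u * e) <= Rabs e).
  { intros u e Hu; rewrite Rabs_mult; pose proof (Rabs_pos e); nra. }
  assert (Hc : Rabs c <= 1) by (apply Rabs_le, COS_bound).
  assert (Hs : Rabs s <= 1) by (apply Rabs_le, SIN_bound).
  assert (Hs' : Rabs (- s) <= 1) by (rewrite Rabs_Ropp; auto).
  (* coordinates of the perturbation along and across the bisector *)
  set (A := rho + (c * e1 + s * e2)); set (B := - s * e1 + c * e2).
  assert (HA : Rabs (A - rho) <= 2 * E).
  { unfold A; replace (rho + (c * e1 + s * e2) - rho) with (c * e1 + s * e2) by ring.
    eapply Rle_trans; [apply Rabs_triang|].
    pose proof (Hmul c e1 Hc); pose proof (Hmul s e2 Hs); lra. }
  assert (HB : Rabs B <= 2 * E).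
  { eapply Rle_trans; [apply Rabs_triang|].
    pose proof (Hmul (- s) e1 Hs'); pose proof (Hmul c e2 Hc); lra. }
  assert (HA' : rho - 2 * E <= A <= rho + 2 * E)
    by (unfold Rabs in HA; destruct Rcase_abs in HA; lra).
  assert (E1 : A * c - B * s = rho * c + e1 * (c * c + s * s)) by (unfold A, B; ring).
  assert (E2 : A * s + B * c = rho * s + e2 * (c * c + s * s)) by (unfold A, B; ring).
  rewrite Hcs, Rmult_1_r in E1, E2.
  replace (x0 + rho * c + e1, y0 + rho * s + e2)
    with (x0 + (A * c - B * s), y0 + (A * s + B * c)) by (rewrite E1, E2; f_equal; ring).
  assert (Htan : 0 < tan (th / 2)) by (apply tan_gt_0; lra).
  apply in_sector_rotated; [auto | lra | | lra].
  assert (rho / 4 * tan (th / 2) <= A * tan (th / 2)) by (apply Rmult_le_compat_r; lra).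
  lra.
Qed.

Lemma sector_near_bisector x0 y0 r t0 th M : 0 < r -> 0 < th < PI -> 0 < M ->
  exists d, 0 < d /\ forall rho e1 e2, 0 < rho < d ->
    Rabs e1 <= M * rho ^ 2 -> Rabs e2 <= M * rho ^ 2 ->
    in_sector x0 y0 r t0 th
      (x0 + rho * cos (t0 + th / 2) + e1, y0 + rho * sin (t0 + th / 2) + e2).
Proof.
  intros Hr Hth HM.
  assert (Htan : 0 < tan (th / 2)) by (apply tan_gt_0; lra).
  set (d := Rmin (r / 2) (Rmin (1 / (8 * M)) (tan (th / 2) / (8 * M)))).
  assert (d <= r / 2) by apply Rmin_l.
  assert (d <= 1 / (8 * M)) by (eapply Rle_trans; [apply Rmin_r | apply Rmin_l]).
  assert (d <= tan (th / 2) / (8 * M)) by (eapply Rle_trans; apply Rmin_r).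
  exists d; split; [repeat apply Rmin_pos; try apply Rdiv_lt_0_compat; lra|].
  intros rho e1 e2 Hrho He1 He2.
  assert (Hd8 : 8 * M * d <= Rmin 1 (tan (th / 2))).
  { apply Rmin_glb; [apply (Rmult_le_reg_r (/ (8 * M))) | apply (Rmult_le_reg_r (/ (8 * M)))];
      try apply Rinv_0_lt_compat; try lra; field_simplify; lra. }
  pose proof (Rmin_l 1 (tan (th / 2))); pose proof (Rmin_r 1 (tan (th / 2))).
  assert (8 * M * rho * rho < 8 * M * d * rho) by (apply Rmult_lt_compat_r; nra).
  apply (in_sector_perturbed_bisector _ _ _ _ _ rho (M * rho ^ 2)); auto; simpl; nra.
Qed.

Lemma dT1_le_dist x y : 0 <= dT1 x y <= Rabs (x - y).
Proof.
  unfold dT1, frac_part; set (z := x - y).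
  destruct (base_Int_part z) as [H1 H2]; split; [apply Rmin_glb; lra|].
  destruct (Rle_lt_dec 0 z).
  - assert (0 <= Int_part z)%Z by (assert (-1 < Int_part z)%Z by (apply lt_IZR; lra); lia).
    apply IZR_le in H; rewrite Rabs_right by lra.
    eapply Rle_trans; [apply Rmin_l | simpl in H; lra].
  - assert (Int_part z <= -1)%Z by (assert (Int_part z < 0)%Z by (apply lt_IZR; lra); lia).
    apply IZR_le in H; rewrite Rabs_left by lra.
    eapply Rle_trans; [apply Rmin_r | lra].
Qed.

Section Approximation.

Variables (F : R -> R) (Q : R -> Prop) (x0 h C : R).
Hypotheses (HF : circle_homeo_lift F) (HM : minimal_set F Q) (H0 : Qirr Q x0)
  (Hh : 0 < h) (Hhi : Q (x0 + h)) (Hlo : Q (x0 - h)) (HC : 0 < C)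
  (Hgaps : forall a b, gap Q a b -> x0 - h <= a -> b <= x0 + h ->
     b - a <= C * (dT1 x0 ((a + b) / 2)) ^ 2).

Lemma orbit_quadratic_approx :
  exists d, 0 < d /\ forall T rho, 0 < rho < d -> Rabs (T - x0) <= rho ->
    exists u, in_orbit1 F x0 u /\ Rabs (u - T) <= (4 * C + 1) * rho ^ 2.
Proof.
  pose proof HM as [HP [HCl _]].
  destruct (quadratic_approx Q x0 h C) as [d [Hd HA]]; auto.
  { intros a b Hg Ha Hb; eapply Rle_trans; [apply Hgaps; auto|].
    apply Rmult_le_compat_l; [lra|].
    destruct (dT1_le_dist x0 ((a + b) / 2)) as [D1 D2].
    rewrite <- (pow2_abs ((a + b) / 2 - x0)), Rabs_minus_sym; apply pow_incr; lra. }
  exists d; split; auto; intros T rho Hr HT.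
  assert (Hr2 : 0 < rho ^ 2) by (apply pow_lt; lra).
  destruct (HA T) as [q [Hq Hqd]]; [lra|].
  destruct (minimal_set_orbit_dense F HF Q x0 HM (proj1 H0) q Hq (rho ^ 2) Hr2)
    as [u [Hu Hud]].
  exists u; split; auto.
  assert ((T - x0) ^ 2 <= rho ^ 2)
    by (rewrite <- pow2_abs; apply pow_incr; split; [apply Rabs_pos | auto]).
  replace (u - T) with ((u - q) + (q - T)) by ring.
  eapply Rle_trans; [apply Rabs_triang | nra].
Qed.

(* The orbit point v1 found first lies in Q_irr, so the orbit also has points just
   right of v1; two orbit points less than 1 apart cannot share an index. *)
Lemma orbit_quadratic_approx_avoiding :
  exists d, 0 < d /\ forall T rho k, 0 < rho < d -> Rabs (T - x0) <= rho ->
    exists v, in_orbit1 F x0 v /\ ~ orbit_index F x0 k v /\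
      Rabs (v - T) <= (4 * C + 3) * rho ^ 2.
Proof.
  pose proof HM as [HP [HCl [_ [HI _]]]].
  destruct orbit_quadratic_approx as [d [Hd HA]].
  exists (Rmin d (1 / 2)); split; [apply Rmin_pos; lra|].
  intros T rho k Hr HT.
  assert (Rmin d (1 / 2) <= d) by apply Rmin_l.
  assert (Rmin d (1 / 2) <= 1 / 2) by apply Rmin_r.
  assert (Hr0 : 0 < rho ^ 2) by (apply pow_lt; lra).
  assert (Hr1 : rho ^ 2 < 1 / 2) by (simpl; nra).
  destruct (HA T rho ltac:(lra) HT) as [v1 [Hv1 Hv1d]].
  destruct (classic (orbit_index F x0 k v1)) as [Hk|Hk].
  2:{ exists v1; repeat split; auto; nra. }
  assert (Hirr : Qirr Q v1) by (apply (in_orbit1_Qirr F HF Q x0); auto).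
  destruct (Qirr_not_isolated_right Q v1 (rho ^ 2)) as [q [Hq Hqd]]; auto; [lra|].
  destruct (minimal_set_orbit_dense F HF Q x0 HM (proj1 H0) q Hq (q - v1))
    as [w [Hw Hwd]]; [lra|].
  apply Rabs_def2 in Hwd as [Hw1 Hw2].
  exists w; split; [auto | split].
  - intros Hkw; destruct (orbit_index_cong F HF x0 k w v1 Hkw Hk) as [z Hz].
    assert (0 < IZR z < 1) as [Hz0 Hz1] by lra.
    apply lt_IZR in Hz0; apply lt_IZR in Hz1; lia.
  - replace (w - T) with ((w - v1) + (v1 - T)) by ring.
    eapply Rle_trans; [apply Rabs_triang|].
    assert (Rabs (w - v1) <= 2 * rho ^ 2) by (apply Rabs_le; lra); nra.
Qed.

End Approximation.

Lemma denjoy_aperiodic F : denjoy F -> aperiodic F.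
Proof.
  intros [HF [[a [Ha Hirr]] _]]; exact (irrational_rotation_aperiodic F HF a Ha Hirr).
Qed.

Lemma polar_offset_le x y rho t : 0 <= rho ->
  Rabs (x + rho * cos t - x) <= rho /\ Rabs (y + rho * sin t - y) <= rho.
Proof.
  intros Hr; replace (x + rho * cos t - x) with (rho * cos t) by ring.
  replace (y + rho * sin t - y) with (rho * sin t) by ring.
  rewrite !Rabs_mult, (Rabs_right rho) by lra.
  assert (Rabs (cos t) <= 1) by apply Rabs_le, COS_bound.
  assert (Rabs (sin t) <= 1) by apply Rabs_le, SIN_bound.
  split; nra.
Qed.

Theorem lemma23 (phi psi : R -> R) (alpha beta : R) (Q1 Q2 : R -> Prop)
  (x0 y0 h1 h2 C1 C2 : R) :
  denjoy phi -> denjoy psi ->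
  rot_number phi alpha -> rot_number psi beta ->
  (forall p q s : Z, IZR p + IZR q * alpha + IZR s * beta = 0 ->
     p = 0%Z /\ q = 0%Z /\ s = 0%Z) ->
  minimal_set phi Q1 -> minimal_set psi Q2 ->
  Qirr Q1 x0 -> Qirr Q2 y0 ->
  (* J1 = [x0 - h1, x0 + h1], J2 = [y0 - h2, y0 + h2] *)
  0 < h1 < 1/2 -> 0 < h2 < 1/2 ->
  Qirr Q1 (x0 - h1) -> Qirr Q1 (x0 + h1) ->
  Qirr Q2 (y0 - h2) -> Qirr Q2 (y0 + h2) ->
  0 < C1 -> 0 < C2 ->
  (forall a b, gap Q1 a b -> x0 - h1 <= a -> b <= x0 + h1 ->
     b - a <= C1 * (dT1 x0 ((a + b) / 2)) ^ 2) ->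
  (forall a b, gap Q2 a b -> y0 - h2 <= a -> b <= y0 + h2 ->
     b - a <= C2 * (dT1 y0 ((a + b) / 2)) ^ 2) ->
  forall r t0 th, 0 < r -> 0 < th < PI -> sector_embedded x0 y0 r t0 th ->
  exists p, in_sector x0 y0 r t0 th p /\
    Qirr Q1 (fst p) /\ Qirr Q2 (snd p) /\
    ~ in_orbit2 phi psi x0 y0 (fst p) (snd p).
Proof.
  intros Dphi Dpsi _ _ _ M1 M2 I1 I2 Hh1 Hh2 I1l I1h I2l I2h HC1 HC2 E1 E2
    r t0 th Hr Hth _.
  assert (HF1 : circle_homeo_lift phi) by apply Dphi.
  assert (HF2 : circle_homeo_lift psi) by apply Dpsi.
  destruct (orbit_quadratic_approx phi Q1 x0 h1 C1 HF1 M1 I1 (proj1 Hh1)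
    (proj1 I1h) (proj1 I1l) HC1 E1) as [d1 [Hd1 A1]].
  destruct (orbit_quadratic_approx_avoiding psi Q2 y0 h2 C2 HF2 M2 I2 (proj1 Hh2)
    (proj1 I2h) (proj1 I2l) HC2 E2) as [d2 [Hd2 A2]].
  destruct (sector_near_bisector x0 y0 r t0 th (4 * C1 + 4 * C2 + 3) Hr Hth ltac:(lra))
    as [ds [Hds Hsec]].
  set (rho := Rmin (Rmin d1 d2) ds / 2); set (t := t0 + th / 2).
  assert (Hrho : 0 < rho < Rmin (Rmin d1 d2) ds)
    by (assert (0 < Rmin (Rmin d1 d2) ds) by (repeat apply Rmin_pos; auto); unfold rho; lra).
  pose proof (Rmin_l (Rmin d1 d2) ds); pose proof (Rmin_r (Rmin d1 d2) ds).
  pose proof (Rmin_l d1 d2); pose proof (Rmin_r d1 d2).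
  destruct (polar_offset_le x0 y0 rho t) as [HT1 HT2]; [lra|].
  destruct (A1 _ rho ltac:(lra) HT1) as [u [Hu Hud]].
  destruct (in_orbit1_index phi x0 u Hu) as [k Hk].
  destruct (A2 _ rho k ltac:(lra) HT2) as [v [Hv [Hvk Hvd]]].
  exists (u, v); simpl; split; [|split; [|split]].
  - replace u with (x0 + rho * cos t + (u - (x0 + rho * cos t))) by ring.
    replace v with (y0 + rho * sin t + (v - (y0 + rho * sin t))) by ring.
    pose proof (pow2_ge_0 rho).
    apply Hsec; [lra | eapply Rle_trans; [exact Hud|] | eapply Rle_trans; [exact Hvd|]];
      apply Rmult_le_compat_r; lra.
  - apply (in_orbit1_Qirr phi HF1 Q1 x0); auto; apply M1.
  - apply (in_orbit1_Qirr psi HF2 Q2 y0); auto; apply M2.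
  - apply (not_in_orbit2_of_index phi HF1 psi x0 y0 k); auto using denjoy_aperiodic.
Qed.
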